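(* Let $n\ge2$ and $k\ge1$ be integers, and let $(S^n,g_0)$ be the round unit sphere $S^n\subset\mathbb{R}^{n+1}$. Let $x^0,\dots,x^n$ be the restrictions to $S^n$ of the standard coordinates of $\mathbb{R}^{n+1}$. Then for all $u\in C^\infty(S^n)$, \[ \sum_{i=0}^n x^i\bigl(L_{2k}(x^iu) - x^iL_{2k}(u)\bigr) = k(n+2k-2)\,L_{2k-2}u . \]
   Context: $\Delta$ is the (nonpositive) Laplace–Beltrami operator of $g_0$. For an integer $m\ge1$, $L_{2m}:=\prod_{j=1}^m\bigl(-\Delta+\tfrac{(n-2j)(n+2j-2)}{4}\bigr)$ (the GJMS operator on the round sphere), and $L_0$ is the identity operator. *)

From Stdlib Require Import Reals Lra List ClassicalEpsilon.
Open Scope R_scope.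

(* Points of R^{n+1} are represented as functions nat -> R; only the
   coordinates 0..n are meaningful (the others are forced to 0 below). *)
Definition vec := nat -> R.

Definition nrm (n : nat) (y : vec) : R := sqrt (sum_f_R0 (fun j => (y j)^2) n).

Definition on_sphere (n : nat) (x : vec) : Prop :=
  sum_f_R0 (fun j => (x j)^2) n = 1 /\ (forall j, (n < j)%nat -> x j = 0).

Definition nonzero (n : nat) (y : vec) : Prop := exists j, (j <= n)%nat /\ y j <> 0.

Definition upd (y : vec) (i : nat) (t : R) : vec :=
  fun j => if Nat.eq_dec j i then t else y j.

(* derivative of a real function (0 where it does not exist) *)
Definition Deriv (g : R -> R) (t : R) : R :=
  match excluded_middle_informative (exists l, derivable_pt_lim g t l) with
  | left H => proj1_sig (constructive_indefinite_description _ H)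
  | right _ => 0
  end.

Definition partial (i : nat) (f : vec -> R) : vec -> R :=
  fun y => Deriv (fun t => f (upd y i t)) (y i).

Definition ext (n : nat) (u : vec -> R) : vec -> R :=
  fun y => u (fun j => if Nat.leb j n then y j / nrm n y else 0).

(* Laplace-Beltrami operator of the round metric on S^n (nonpositive):
   Delta_{S^n} u = Delta_{R^{n+1}} (u(y/|y|)) restricted to S^n. *)
Definition lapS (n : nat) (u : vec -> R) : vec -> R :=
  fun x => sum_f_R0 (fun i => partial i (partial i (ext n u)) x) n.

(* GJMS operator L_{2k} = prod_{j=1}^k (-Delta + (n-2j)(n+2j-2)/4), L_0 = id *)
Fixpoint GJMS (n k : nat) (u : vec -> R) : vec -> R :=
  match k with
  | O => u
  | S k' =>
      let v := GJMS n k' u in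
      let c := (INR n - 2 * INR k) * (INR n + 2 * INR k - 2) / 4 in
      fun x => - lapS n v x + c * v x
  end.

Definition iterD (l : list nat) (f : vec -> R) : vec -> R :=
  fold_right (fun i g => partial i g) f l.

Definition cont_at (n : nat) (f : vec -> R) (y : vec) : Prop :=
  forall eps, 0 < eps -> exists delta, 0 < delta /\
    forall z, (forall j, (j <= n)%nat -> Rabs (z j - y j) < delta) ->
              (forall j, (n < j)%nat -> z j = y j) ->
              Rabs (f z - f y) < eps.

Definition smooth_punctured (n : nat) (f : vec -> R) : Prop :=
  forall (l : list nat), Forall (fun i => (i <= n)%nat) l ->
  forall y, nonzero n y -> (forall j, (n < j)%nat -> y j = 0) ->
    cont_at n (iterD l f) y /\
    forall i, (i <= n)%nat -> exists d, derivable_pt_lim (fun t => iterD l f (upd y i t)) (y i) d.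

(* u in C^infty(S^n) iff its 0-homogeneous extension is C^infty on R^{n+1}\{0} *)
Definition smooth_sphere (n : nat) (u : vec -> R) : Prop := smooth_punctured n (ext n u).

Definition mulx (i : nat) (u : vec -> R) : vec -> R := fun x => x i * u x.

From Pilot Require Import Defs.
From Stdlib Require Import Reals Lra Lia List ClassicalEpsilon FunctionalExtensionality.
From Coquelicot Require Coquelicot.
Open Scope R_scope.

(** Functions on S^n are handled through their 0-homogeneous extensions to R^{n+1}\{0}:
    the Laplace-Beltrami operator is the Euclidean Laplacian of the extension, and the
    partial derivative [partial i] of the extension is the i-th component [sphere_grad i]
    of the spherical gradient.  Euler's identity for homogeneous functions and the symmetry
    of second derivatives give, on the sphere, the commutation rules
      Delta (x^i f) = x^i Delta f - n x^i f + 2 sphere_grad i f,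
      Delta (sphere_grad i f) = sphere_grad i (Delta f) + (n - 2) sphere_grad i f - 2 x^i Delta f.
    By induction on k they yield
      L_2k (x^i u) = x^i (L_2k u + k (n + 2k - 2) L_(2k-2) u) - 2k sphere_grad i (L_(2k-2) u),
    and the theorem follows on multiplying by x^i and summing, since sum_i (x^i)^2 = 1 and,
    by Euler's identity in degree 0, sum_i x^i sphere_grad i = 0. *)

(** * One-variable calculus *)

Lemma Deriv_of_lim (g : R -> R) t l : derivable_pt_lim g t l -> Deriv g t = l.
Proof.
  intro H. unfold Deriv.
  destruct (excluded_middle_informative _) as [H1|H1].
  - destruct (constructive_indefinite_description _ H1) as [l' Hl']; simpl.
    exact (uniqueness_limite _ _ _ _ Hl' H).
  - exfalso; apply H1; eauto.
Qed.

Definition near (t0 : R) (P : R -> Prop) : Prop :=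
  exists d, 0 < d /\ forall t, Rabs (t - t0) < d -> P t.

Lemma near_self t0 P : near t0 P -> P t0.
Proof. intros [d [Hd H]]; apply H; rewrite Rminus_diag, Rabs_R0; auto. Qed.

Lemma near_mono t0 (P Q : R -> Prop) : (forall t, P t -> Q t) -> near t0 P -> near t0 Q.
Proof. intros H [d [Hd Hp]]; exists d; split; auto. Qed.

Lemma near_and t0 P Q : near t0 P -> near t0 Q -> near t0 (fun t => P t /\ Q t).
Proof.
  intros [d1 [H1 P1]] [d2 [H2 Q2]]. exists (Rmin d1 d2); split; [apply Rmin_pos; auto|].
  intros t Ht; split.
  - apply P1; eapply Rlt_le_trans; [exact Ht|apply Rmin_l].
  - apply Q2; eapply Rlt_le_trans; [exact Ht|apply Rmin_r].
Qed.

Lemma near_near t0 P : near t0 P -> near t0 (fun t => near t P).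
Proof.
  intros [d [Hd H]]. exists d; split; auto. intros t Ht.
  exists (d - Rabs (t - t0)); split; [lra|]. intros s Hs. apply H.
  replace (s - t0) with ((s - t) + (t - t0)) by ring.
  generalize (Rabs_triang (s - t) (t - t0)); lra.
Qed.

Lemma derivable_pt_lim_near (g h : R -> R) t0 l :
  near t0 (fun t => g t = h t) -> derivable_pt_lim g t0 l -> derivable_pt_lim h t0 l.
Proof.
  intros [d [Hd E]] H eps Heps.
  destruct (H eps Heps) as [del Hdel].
  assert (Hm : 0 < Rmin del d) by (apply Rmin_pos; [apply cond_pos|lra]).
  exists (mkposreal _ Hm). intros hh Hh0 Hh. simpl in Hh.
  rewrite <- !E.
  - apply Hdel; auto. apply Rlt_le_trans with (1 := Hh). apply Rmin_l.
  - rewrite Rminus_diag, Rabs_R0; lra.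
  - replace (t0 + hh - t0) with hh by ring. apply Rlt_le_trans with (1 := Hh). apply Rmin_r.
Qed.

Lemma Deriv_near (g h : R -> R) t0 :
  near t0 (fun t => g t = h t) -> Deriv g t0 = Deriv h t0.
Proof.
  intros Hn. unfold Deriv at 1.
  destruct (excluded_middle_informative _) as [[l Hl]|H1].
  - destruct (constructive_indefinite_description _ _) as [l' Hl']; simpl.
    symmetry; apply Deriv_of_lim. eapply derivable_pt_lim_near; eauto.
  - unfold Deriv. destruct (excluded_middle_informative _) as [[l Hl]|H2]; auto.
    exfalso. apply H1. exists l. eapply derivable_pt_lim_near; [|exact Hl].
    eapply near_mono; [|exact Hn]. intros t E; auto.
Qed.

Lemma Deriv2_near (g h : R -> R) t0 :
  near t0 (fun t => g t = h t) -> Deriv (Deriv g) t0 = Deriv (Deriv h) t0.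
Proof.
  intros Hn. apply Deriv_near.
  eapply near_mono; [|exact (near_near _ _ Hn)]. intros t; apply Deriv_near.
Qed.

Lemma Deriv2_mult (a g a1 g1 : R -> R) (t0 a2 g2 : R) :
  near t0 (fun t => derivable_pt_lim a t (a1 t) /\ derivable_pt_lim g t (g1 t)) ->
  derivable_pt_lim a1 t0 a2 -> derivable_pt_lim g1 t0 g2 ->
  Deriv (Deriv (fun t => a t * g t)) t0 = a2 * g t0 + 2 * a1 t0 * g1 t0 + a t0 * g2.
Proof.
  intros Hn Ha Hg.
  rewrite (Deriv_near _ (fun t => a1 t * g t + a t * g1 t)).
  - apply Deriv_of_lim. destruct (near_self _ _ Hn) as [Ha0 Hg0].
    replace (a2 * g t0 + 2 * a1 t0 * g1 t0 + a t0 * g2) with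
      ((a2 * g t0 + a1 t0 * g1 t0) + (a1 t0 * g1 t0 + a t0 * g2)) by ring.
    apply (derivable_pt_lim_plus (fun t => a1 t * g t) (fun t => a t * g1 t));
      apply derivable_pt_lim_mult; auto.
  - eapply near_mono; [|exact Hn]. intros t [H1 H2]. apply Deriv_of_lim.
    apply derivable_pt_lim_mult; auto.
Qed.

Section Scalar_calculus.
Import Coquelicot.Coquelicot.

Section Shifted_square.
Variable A : R.

Lemma derivable_pt_lim_shift_sq t : derivable_pt_lim (fun t => A + t^2) t (2 * t).
Proof. apply is_derive_Reals. auto_derive; auto. ring. Qed.

Lemma near_shift_sq_pos t0 : 0 < A + t0^2 -> near t0 (fun t => 0 < A + t^2).
Proof.
  intros H. assert (C : continuity_pt (fun t => A + t^2) t0).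
  { apply derivable_continuous_pt. exists (2 * t0). apply derivable_pt_lim_shift_sq. }
  destruct (C (A + t0^2) H) as [d [Hd Hc]]. exists d; split; auto.
  intros t Ht. destruct (Req_dec t t0) as [->|Hne]; auto.
  assert (K : Rabs (A + t^2 - (A + t0^2)) < A + t0^2).
  { apply (Hc t). split; [split; [exact I|auto]|auto]. }
  apply Rabs_def2 in K. lra.
Qed.

Section Positive.
Variable t : R.
Hypothesis Ht : 0 < A + t^2.

(* [auto_derive] writes [t^2] as [t * (t * 1)]. *)
Let sqrt_pos : 0 < sqrt (A + t * (t * 1)).
Proof. apply sqrt_lt_R0. lra. Qed.

Lemma derivable_pt_lim_inv_sqrt_pow m :
  derivable_pt_lim (fun t => (/ sqrt (A + t^2))^m) t
    (- INR m * t * (/ sqrt (A + t^2))^(m + 2)).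
Proof.
  apply is_derive_Reals. replace (A + t^2) with (A + t * (t * 1)) by ring.
  generalize sqrt_pos; intro Hs.
  auto_derive; [repeat split; lra|].
  destruct m; simpl; [ring|]. rewrite pow_add. simpl. field. lra.
Qed.

Lemma derivable_pt_lim_sqrt_shift_sq :
  derivable_pt_lim (fun t => sqrt (A + t^2)) t (t * / sqrt (A + t^2)).
Proof.
  apply is_derive_Reals. replace (A + t^2) with (A + t * (t * 1)) by ring.
  generalize sqrt_pos; intro Hs.
  auto_derive; [repeat split; lra|]. field. lra.
Qed.

Lemma derivable_pt_lim_div_sqrt_shift_sq :
  derivable_pt_lim (fun t => t / sqrt (A + t^2)) t (A * (/ sqrt (A + t^2))^3).
Proof.
  apply is_derive_Reals. replace (A + t^2) with (A + t * (t * 1)) by ring.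
  generalize sqrt_pos; intro Hs.
  assert (Hs2 : sqrt (A + t * (t * 1)) * sqrt (A + t * (t * 1)) = A + t * (t * 1))
    by (apply sqrt_sqrt; lra).
  auto_derive; [repeat split; lra|].
  set (s := sqrt (A + t * (t * 1))) in *. clearbody s.
  replace A with (s * s - t * (t * 1)) by lra. field. lra.
Qed.

Lemma derivable_pt_lim_scal_inv_sqrt_pow c m :
  derivable_pt_lim (fun t => c * (/ sqrt (A + t^2))^m) t
    (- c * INR m * t * (/ sqrt (A + t^2))^(m + 2)).
Proof.
  replace (- c * INR m * t * (/ sqrt (A + t^2))^(m + 2))
    with (c * (- INR m * t * (/ sqrt (A + t^2))^(m + 2))) by ring.
  apply (derivable_pt_lim_scal (fun t => (/ sqrt (A + t^2))^m)).
  apply derivable_pt_lim_inv_sqrt_pow.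
Qed.

Lemma derivable_pt_lim_lin_inv_sqrt_pow c m :
  derivable_pt_lim (fun t => c * t * (/ sqrt (A + t^2))^m) t
    (c * (/ sqrt (A + t^2))^m - c * INR m * t^2 * (/ sqrt (A + t^2))^(m + 2)).
Proof.
  replace (c * (/ sqrt (A + t^2))^m - c * INR m * t^2 * (/ sqrt (A + t^2))^(m + 2))
    with (c * (/ sqrt (A + t^2))^m + c * t * (- INR m * t * (/ sqrt (A + t^2))^(m + 2)))
    by ring.
  apply (derivable_pt_lim_mult (fun t => c * t) (fun t => (/ sqrt (A + t^2))^m)).
  - apply is_derive_Reals. auto_derive; auto. ring.
  - apply derivable_pt_lim_inv_sqrt_pow.
Qed.

End Positive.
End Shifted_square.

Lemma continuity_pt_inv_sqrt_pow m s : 0 < s -> continuity_pt (fun s => (/ sqrt s)^m) s.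
Proof.
  intros Hs. assert (0 < sqrt s) by (apply sqrt_lt_R0; auto).
  apply derivable_continuous_pt. eexists. apply is_derive_Reals.
  auto_derive; [repeat split; lra|reflexivity].
Qed.

Lemma derivable_pt_lim_div_pow_shift c m :
  derivable_pt_lim (fun s => c / (1 + s)^m) 0 (- INR m * c).
Proof.
  apply is_derive_Reals. auto_derive.
  - rewrite Rplus_0_r, pow1. lra.
  - rewrite Rplus_0_r, pow1. destruct m; simpl; [ring|]. rewrite pow1. field.
Qed.

End Scalar_calculus.

(** * Partial derivatives on the punctured space *)

Lemma upd_same y i t : upd y i t i = t.
Proof. unfold upd; destruct (Nat.eq_dec i i); congruence. Qed.

Lemma upd_other y i t j : j <> i -> upd y i t j = y j.
Proof. intro; unfold upd; destruct (Nat.eq_dec j i); congruence. Qed.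

Lemma upd_upd y i t s : upd (upd y i t) i s = upd y i s.
Proof.
  apply functional_extensionality; intro j; unfold upd; destruct (Nat.eq_dec j i); auto.
Qed.

Lemma upd_id y i : upd y i (y i) = y.
Proof.
  apply functional_extensionality; intro j; unfold upd; destruct (Nat.eq_dec j i); subst; auto.
Qed.

Lemma upd_comm y i j a b : i <> j -> upd (upd y i a) j b = upd (upd y j b) i a.
Proof.
  intro; apply functional_extensionality; intro k; unfold upd.
  destruct (Nat.eq_dec k j), (Nat.eq_dec k i); subst; auto; congruence.
Qed.

Definition line (F : vec -> R) (y : vec) (i : nat) : R -> R := fun t => F (upd y i t).

Lemma line_upd F y i t : line F (upd y i t) i = line F y i.
Proof. apply functional_extensionality; intro s; unfold line; rewrite upd_upd; auto. Qed.

Lemma partial_upd i F y t : partial i F (upd y i t) = Deriv (line F y i) t.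
Proof.
  unfold partial. rewrite upd_same. f_equal.
  apply functional_extensionality; intro s. rewrite upd_upd; auto.
Qed.

Lemma line_partial i F y : line (partial i F) y i = Deriv (line F y i).
Proof. apply functional_extensionality; intro t. apply partial_upd. Qed.

Lemma partial2_Deriv2 i F y : partial i (partial i F) y = Deriv (Deriv (line F y i)) (y i).
Proof. unfold partial at 1. fold (line (partial i F) y i). rewrite line_partial; auto. Qed.

Section Punctured_space.
Variable n : nat.

(* [Defs.nonzero] is qualified because [Reals] also exports a [nonzero]. *)
Definition punctured (y : vec) : Prop := Defs.nonzero n y /\ (forall j, (n < j)%nat -> y j = 0).

Definition coord_close (y z : vec) (d : R) : Prop :=
  (forall j, (j <= n)%nat -> Rabs (z j - y j) < d) /\ (forall j, (n < j)%nat -> z j = y j).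

Lemma punctured_open y :
  punctured y -> exists d, 0 < d /\ forall z, coord_close y z d -> punctured z.
Proof.
  intros [[j [Hj Hy]] Ht]. exists (Rabs (y j)); split; [apply Rabs_pos_lt; auto|].
  intros z [Hc1 Hc2]. split.
  - exists j; split; auto. intro Hz. specialize (Hc1 j Hj). rewrite Hz in Hc1.
    rewrite Rminus_0_l, Rabs_Ropp in Hc1. lra.
  - intros k Hk. rewrite Hc2; auto.
Qed.

Lemma coord_close_le y z d d' : d <= d' -> coord_close y z d -> coord_close y z d'.
Proof.
  intros Hd [H1 H2]. split; auto. intros j Hj. eapply Rlt_le_trans; [apply H1; auto|auto].
Qed.

Lemma coord_close_upd y i t d :
  (i <= n)%nat -> 0 < d -> Rabs (t - y i) < d -> coord_close y (upd y i t) d.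
Proof.
  intros Hi Hd Ht. split.
  - intros j Hj. destruct (Nat.eq_dec j i) as [->|].
    + rewrite upd_same; auto.
    + rewrite upd_other, Rminus_diag, Rabs_R0; auto.
  - intros j Hj. rewrite upd_other; auto. lia.
Qed.

Lemma near_punctured_line y i :
  punctured y -> (i <= n)%nat -> near (y i) (fun t => punctured (upd y i t)).
Proof.
  intros Hy Hi. destruct (punctured_open y Hy) as [d [Hd H]]. exists d; split; auto.
  intros t Ht. apply H. apply coord_close_upd; auto.
Qed.

Definition eq_punct (F G : vec -> R) : Prop := forall y, punctured y -> F y = G y.

Lemma eq_punct_sym F G : eq_punct F G -> eq_punct G F.
Proof. intros E y Hy; symmetry; auto. Qed.

Lemma eq_punct_line F G y i : eq_punct F G -> punctured y -> (i <= n)%nat ->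
  near (y i) (fun t => line F y i t = line G y i t).
Proof.
  intros E Hy Hi. eapply near_mono; [|apply (near_punctured_line y i Hy Hi)].
  intros t Ht; apply E; auto.
Qed.

Lemma eq_punct_partial F G i : eq_punct F G -> (i <= n)%nat ->
  eq_punct (partial i F) (partial i G).
Proof.
  intros E Hi y Hy. unfold partial. fold (line F y i) (line G y i).
  apply Deriv_near. apply eq_punct_line; auto.
Qed.

Definition derivable_along (F : vec -> R) (y : vec) (i : nat) : Prop :=
  exists d, derivable_pt_lim (line F y i) (y i) d.

Lemma derivable_along_partial F y i : derivable_along F y i ->
  derivable_pt_lim (line F y i) (y i) (partial i F y).
Proof.
  intros [d Hd]. unfold partial; fold (line F y i). rewrite (Deriv_of_lim _ _ _ Hd); auto.
Qed.

Lemma derivable_along_eq_punct F G y i : eq_punct F G -> punctured y -> (i <= n)%nat ->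
  derivable_along F y i -> derivable_along G y i.
Proof.
  intros E Hy Hi [d Hd]. exists d.
  eapply derivable_pt_lim_near; [|exact Hd]. apply eq_punct_line; auto.
Qed.

Lemma derivable_along_plus F G y i : derivable_along F y i -> derivable_along G y i ->
  derivable_along (fun z => F z + G z) y i.
Proof.
  intros [a Ha] [b Hb]; exists (a + b).
  apply (derivable_pt_lim_plus (line F y i) (line G y i)); auto.
Qed.

Lemma derivable_along_mult F G y i : derivable_along F y i -> derivable_along G y i ->
  derivable_along (fun z => F z * G z) y i.
Proof.
  intros [a Ha] [b Hb]; eexists.
  apply (derivable_pt_lim_mult (line F y i) (line G y i)); eauto.
Qed.

Lemma partial_plus F G y i : derivable_along F y i -> derivable_along G y i ->
  partial i (fun z => F z + G z) y = partial i F y + partial i G y.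
Proof.
  intros HF HG. apply Deriv_of_lim.
  apply (derivable_pt_lim_plus (line F y i) (line G y i)); apply derivable_along_partial; auto.
Qed.

Lemma partial_mult F G y i : derivable_along F y i -> derivable_along G y i ->
  partial i (fun z => F z * G z) y = partial i F y * G y + F y * partial i G y.
Proof.
  intros HF HG. apply Deriv_of_lim.
  generalize (derivable_pt_lim_mult (line F y i) (line G y i) (y i) _ _
    (derivable_along_partial _ _ _ HF) (derivable_along_partial _ _ _ HG)).
  unfold line, mult_fct; rewrite upd_id; auto.
Qed.

Lemma partial_lin F G y i a b : derivable_along F y i -> derivable_along G y i ->
  partial i (fun z => a * F z + b * G z) y = a * partial i F y + b * partial i G y.
Proof.
  intros HF HG. apply Deriv_of_lim.
  apply (derivable_pt_lim_plus (fun t => a * line F y i t) (fun t => b * line G y i t));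
    apply derivable_pt_lim_scal; apply derivable_along_partial; auto.
Qed.

Lemma derivable_along_sum (G : nat -> vec -> R) y i m :
  (forall k, (k <= m)%nat -> derivable_along (G k) y i) ->
  derivable_along (fun z => sum_f_R0 (fun k => G k z) m) y i.
Proof.
  induction m; intros H; [apply H; auto|].
  apply (derivable_along_plus (fun z => sum_f_R0 (fun k => G k z) m) (G (S m))); auto.
Qed.

Lemma partial_sum (G : nat -> vec -> R) y i m :
  (forall k, (k <= m)%nat -> derivable_along (G k) y i) ->
  partial i (fun z => sum_f_R0 (fun k => G k z) m) y = sum_f_R0 (fun k => partial i (G k) y) m.
Proof.
  induction m; intros H; [reflexivity|].
  cbn [sum_f_R0]. rewrite (partial_plus (fun z => sum_f_R0 (fun k => G k z) m) (G (S m))).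
  - rewrite IHm; auto.
  - apply derivable_along_sum; auto.
  - apply H; auto.
Qed.

Lemma cont_at_eq_punct F G y : eq_punct F G -> punctured y -> cont_at n F y -> cont_at n G y.
Proof.
  intros E Hy C eps Heps. destruct (C eps Heps) as [d [Hd H]].
  destruct (punctured_open y Hy) as [d2 [Hd2 H2]].
  exists (Rmin d d2); split; [apply Rmin_pos; auto|].
  intros z Hz1 Hz2. rewrite <- (E z), <- (E y); auto.
  - apply H; auto. intros j Hj. eapply Rlt_le_trans; [apply Hz1; auto|apply Rmin_l].
  - apply H2. split; auto. intros j Hj. eapply Rlt_le_trans; [apply Hz1; auto|apply Rmin_r].
Qed.

Lemma cont_at_binop (op : R -> R -> R) F G y :
  (forall eps, 0 < eps -> exists e, 0 < e /\ forall a b,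
     Rabs (a - F y) < e -> Rabs (b - G y) < e -> Rabs (op a b - op (F y) (G y)) < eps) ->
  cont_at n F y -> cont_at n G y -> cont_at n (fun z => op (F z) (G z)) y.
Proof.
  intros Hop CF CG eps Heps.
  destruct (Hop eps Heps) as [e [He Hop']].
  destruct (CF e He) as [d1 [Hd1 H1]]. destruct (CG e He) as [d2 [Hd2 H2]].
  exists (Rmin d1 d2); split; [apply Rmin_pos; auto|].
  intros z Hz1 Hz2. apply Hop'.
  - apply H1; auto. intros j Hj; eapply Rlt_le_trans; [apply Hz1; auto|apply Rmin_l].
  - apply H2; auto. intros j Hj; eapply Rlt_le_trans; [apply Hz1; auto|apply Rmin_r].
Qed.

Lemma cont_at_plus F G y : cont_at n F y -> cont_at n G y -> cont_at n (fun z => F z + G z) y.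
Proof.
  apply (cont_at_binop Rplus).
  intros eps Heps. exists (eps / 2); split; [lra|]. intros a b Ha Hb.
  replace (a + b - (F y + G y)) with ((a - F y) + (b - G y)) by ring.
  eapply Rle_lt_trans; [apply Rabs_triang|lra].
Qed.

Lemma cont_at_mult F G y : cont_at n F y -> cont_at n G y -> cont_at n (fun z => F z * G z) y.
Proof.
  apply (cont_at_binop Rmult).
  intros eps Heps. set (M := 1 + Rabs (F y) + Rabs (G y)).
  assert (HM : 0 < M) by (unfold M; generalize (Rabs_pos (F y)) (Rabs_pos (G y)); lra).
  exists (Rmin 1 (eps / (2 * M))); split.
  { apply Rmin_pos; [lra|]. apply Rdiv_lt_0_compat; lra. }
  intros a b Ha Hb.
  assert (Ha1 : Rabs (a - F y) <= 1) by (left; eapply Rlt_le_trans; [exact Ha|apply Rmin_l]).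
  assert (Ha2 : Rabs (a - F y) < eps / (2 * M)) by (eapply Rlt_le_trans; [exact Ha|apply Rmin_r]).
  assert (Hb2 : Rabs (b - G y) < eps / (2 * M)) by (eapply Rlt_le_trans; [exact Hb|apply Rmin_r]).
  replace (a * b - F y * G y)
    with ((a - F y) * (b - G y) + F y * (b - G y) + G y * (a - F y)) by ring.
  set (u := a - F y) in *. set (v := b - G y) in *.
  assert (Rabs (u * v + F y * v + G y * u)
          <= Rabs u * Rabs v + Rabs (F y) * Rabs v + Rabs (G y) * Rabs u).
  { rewrite <- !Rabs_mult. eapply Rle_trans; [apply Rabs_triang|].
    apply Rplus_le_compat_r. apply Rabs_triang. }
  assert (Rabs u * Rabs v <= Rabs v) by (generalize (Rabs_pos v); nra).
  assert (Rabs (F y) * Rabs v <= Rabs (F y) * (eps / (2 * M)))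
    by (apply Rmult_le_compat_l; [apply Rabs_pos|lra]).
  assert (Rabs (G y) * Rabs u <= Rabs (G y) * (eps / (2 * M)))
    by (apply Rmult_le_compat_l; [apply Rabs_pos|lra]).
  assert (M * (eps / (2 * M)) = eps / 2) by (field; lra).
  unfold M in *. nra.
Qed.

Lemma cont_at_const c y : cont_at n (fun _ => c) y.
Proof. intros eps Heps; exists 1; split; [lra|]. intros; rewrite Rminus_diag, Rabs_R0; auto. Qed.

Lemma cont_at_coord j y : cont_at n (fun z => z j) y.
Proof.
  intros eps Heps; exists eps; split; auto. intros z H1 H2.
  destruct (Compare_dec.le_lt_dec j n); [apply H1; auto|].
  rewrite H2, Rminus_diag, Rabs_R0; auto.
Qed.

Lemma cont_at_comp (phi : R -> R) F y : cont_at n F y -> continuity_pt phi (F y) ->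
  cont_at n (fun z => phi (F z)) y.
Proof.
  intros CF Cphi eps Heps.
  destruct (Cphi eps Heps) as [e [He H]].
  destruct (CF e He) as [d [Hd H1]]. exists d; split; auto.
  intros z Hz1 Hz2. destruct (Req_dec (F z) (F y)) as [E|E].
  - rewrite E, Rminus_diag, Rabs_R0; auto.
  - apply (H (F z)). split; [split; [exact I|auto]|]. apply H1; auto.
Qed.


Definition cont_derivable (F : vec -> R) : Prop :=
  forall y, punctured y -> cont_at n F y /\ forall i, (i <= n)%nat -> derivable_along F y i.

Fixpoint cont_diff (N : nat) (F : vec -> R) : Prop :=
  match N with
  | O => cont_derivable F
  | S N' => cont_derivable F /\ forall i, (i <= n)%nat -> cont_diff N' (partial i F)
  end.

Definition smooth (F : vec -> R) : Prop := forall N, cont_diff N F.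

Lemma cont_diff_S N F : cont_diff (S N) F -> cont_diff N F.
Proof.
  revert F; induction N; intros F H; simpl in *; [tauto|].
  destruct H as [H0 H1]. split; auto.
Qed.

Lemma cont_derivable_eq_punct F G : eq_punct F G -> cont_derivable F -> cont_derivable G.
Proof.
  intros E H y Hy. destruct (H y Hy) as [H1 H2]. split.
  - eapply cont_at_eq_punct; eauto.
  - intros i Hi; eapply derivable_along_eq_punct; eauto.
Qed.

Lemma cont_diff_eq_punct N F G : eq_punct F G -> cont_diff N F -> cont_diff N G.
Proof.
  revert F G; induction N; intros F G E H; simpl in *.
  - eapply cont_derivable_eq_punct; eauto.
  - destruct H as [H0 H1]. split; [eapply cont_derivable_eq_punct; eauto|].
    intros i Hi. apply (IHN (partial i F)); auto. apply eq_punct_partial; auto.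
Qed.

Lemma smooth_eq_punct F G : eq_punct F G -> smooth F -> smooth G.
Proof. intros E H N; eapply cont_diff_eq_punct; eauto. Qed.

Lemma smooth_ext F G : (forall z, F z = G z) -> smooth F -> smooth G.
Proof. intros E. apply smooth_eq_punct. intros y _; auto. Qed.

Lemma smooth_partial F i : (i <= n)%nat -> smooth F -> smooth (partial i F).
Proof. intros Hi H N. apply (H (S N)); auto. Qed.

Lemma smooth_cont_derivable F : smooth F -> cont_derivable F.
Proof. intro H; apply (H O). Qed.

Lemma smooth_derivable_along F y i :
  smooth F -> punctured y -> (i <= n)%nat -> derivable_along F y i.
Proof. intros H Hy Hi. apply (smooth_cont_derivable F H y Hy); auto. Qed.

Lemma cont_derivable_plus F G :
  cont_derivable F -> cont_derivable G -> cont_derivable (fun z => F z + G z).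
Proof.
  intros HF HG y Hy. destruct (HF y Hy), (HG y Hy). split.
  - apply cont_at_plus; auto.
  - intros; apply derivable_along_plus; auto.
Qed.

Lemma cont_derivable_mult F G :
  cont_derivable F -> cont_derivable G -> cont_derivable (fun z => F z * G z).
Proof.
  intros HF HG y Hy. destruct (HF y Hy), (HG y Hy). split.
  - apply cont_at_mult; auto.
  - intros; apply derivable_along_mult; auto.
Qed.

Lemma cont_diff_plus N : forall F G,
  cont_diff N F -> cont_diff N G -> cont_diff N (fun z => F z + G z).
Proof.
  induction N; intros F G HF HG; simpl in *; [apply cont_derivable_plus; auto|].
  destruct HF as [HF0 HF1], HG as [HG0 HG1]. split; [apply cont_derivable_plus; auto|].
  intros i Hi. eapply cont_diff_eq_punct; [|apply (IHN _ _ (HF1 i Hi) (HG1 i Hi))].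
  intros y Hy. rewrite partial_plus; [auto|apply HF0|apply HG0]; auto.
Qed.

Lemma cont_diff_mult N : forall F G,
  cont_diff N F -> cont_diff N G -> cont_diff N (fun z => F z * G z).
Proof.
  induction N; intros F G HF HG; [apply cont_derivable_mult; auto|].
  assert (SF : cont_diff N F) by (apply cont_diff_S; auto).
  assert (SG : cont_diff N G) by (apply cont_diff_S; auto).
  destruct HF as [HF0 HF1], HG as [HG0 HG1]. split; [apply cont_derivable_mult; auto|].
  intros i Hi. eapply cont_diff_eq_punct;
    [|apply cont_diff_plus; [apply (IHN _ _ (HF1 i Hi) SG)|apply (IHN _ _ SF (HG1 i Hi))]].
  intros y Hy. rewrite partial_mult; [auto|apply HF0|apply HG0]; auto.
Qed.

Lemma smooth_plus F G : smooth F -> smooth G -> smooth (fun z => F z + G z).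
Proof. intros HF HG N; apply cont_diff_plus; auto. Qed.

Lemma smooth_mult F G : smooth F -> smooth G -> smooth (fun z => F z * G z).
Proof. intros HF HG N; apply cont_diff_mult; auto. Qed.

Lemma partial_const c i : partial i (fun _ => c) = fun _ => 0.
Proof.
  apply functional_extensionality; intro y. apply Deriv_of_lim. apply derivable_pt_lim_const.
Qed.

Lemma cont_derivable_const c : cont_derivable (fun _ => c).
Proof.
  intros y Hy; split; [apply cont_at_const|].
  intros i Hi; exists 0; apply derivable_pt_lim_const.
Qed.

Lemma smooth_const c : smooth (fun _ => c).
Proof.
  intro N; revert c; induction N; intro c; [apply cont_derivable_const|].
  split; [apply cont_derivable_const|]. intros i Hi; rewrite partial_const; auto.
Qed.

Lemma smooth_scal c F : smooth F -> smooth (fun z => c * F z).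
Proof. intros HF. apply (smooth_mult (fun _ => c)); auto. apply smooth_const. Qed.

Lemma smooth_sum (G : nat -> vec -> R) m : (forall k, (k <= m)%nat -> smooth (G k)) ->
  smooth (fun z => sum_f_R0 (fun k => G k z) m).
Proof.
  induction m; intros H; simpl; [apply H; auto|].
  apply (smooth_plus (fun z => sum_f_R0 (fun k => G k z) m)); auto.
Qed.

Lemma line_coord j y i : line (fun z => z j) y i = fun t => if Nat.eq_dec j i then t else y j.
Proof. reflexivity. Qed.

Lemma derivable_pt_lim_line_coord j y i t :
  derivable_pt_lim (line (fun z => z j) y i) t (if Nat.eq_dec j i then 1 else 0).
Proof.
  rewrite line_coord. destruct (Nat.eq_dec j i).
  - apply derivable_pt_lim_id.
  - apply derivable_pt_lim_const.
Qed.

Lemma cont_derivable_coord j : cont_derivable (fun z => z j).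
Proof.
  intros y Hy; split; [apply cont_at_coord|].
  intros i Hi. eexists. apply derivable_pt_lim_line_coord.
Qed.

Lemma smooth_coord j : smooth (fun z => z j).
Proof.
  intros [|N]; [apply cont_derivable_coord|]. split; [apply cont_derivable_coord|].
  intros i Hi.
  replace (partial i (fun z => z j)) with (fun _ : vec => if Nat.eq_dec j i then 1 else 0).
  - apply smooth_const.
  - apply functional_extensionality; intro y. symmetry. apply Deriv_of_lim.
    apply derivable_pt_lim_line_coord.
Qed.

Lemma smooth_punctured_cont_diff N F : smooth_punctured n F -> cont_diff N F.
Proof.
  revert F; induction N; intros F HF.
  - intros y [Hy1 Hy2]. destruct (HF nil (Forall_nil _) y Hy1 Hy2) as [C D]. split; auto.
  - split.
    + intros y [Hy1 Hy2]. destruct (HF nil (Forall_nil _) y Hy1 Hy2) as [C D]. split; auto.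
    + intros i Hi. apply IHN. intros l Hl y Hy1 Hy2.
      replace (iterD l (partial i F)) with (iterD (l ++ i :: nil) F)
        by (unfold iterD; rewrite fold_right_app; reflexivity).
      apply HF; auto. apply Forall_app; split; auto.
Qed.

End Punctured_space.

Lemma sum_f_R0_ge_term (f : nat -> R) m j :
  (forall k, 0 <= f k) -> (j <= m)%nat -> f j <= sum_f_R0 f m.
Proof.
  intros Hf. induction m; intros Hj.
  - replace j with 0%nat by lia. simpl; lra.
  - rewrite tech5. destruct (Nat.eq_dec j (S m)) as [->|].
    + generalize (cond_pos_sum f m Hf); lra.
    + generalize (IHm ltac:(lia)) (Hf (S m)); lra.
Qed.

Lemma sum_sq_upd y i t m :
  sum_f_R0 (fun j => (upd y i t j)^2) m =
  sum_f_R0 (fun j => (y j)^2) m + (if Compare_dec.le_lt_dec i m then t^2 - (y i)^2 else 0).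
Proof.
  induction m.
  - simpl. unfold upd.
    destruct (Nat.eq_dec 0 i), (Compare_dec.le_lt_dec i 0); subst; try lia; ring.
  - rewrite !tech5, IHm. unfold upd at 1.
    destruct (Nat.eq_dec (S m) i), (Compare_dec.le_lt_dec i m),
      (Compare_dec.le_lt_dec i (S m)); subst; try lia; ring.
Qed.

Section Euclidean_norm.
Variable n : nat.

Definition sqnorm (y : vec) : R := sum_f_R0 (fun j => (y j)^2) n.

Lemma nrm_sqnorm y : nrm n y = sqrt (sqnorm y).
Proof. reflexivity. Qed.

Lemma sqnorm_upd y i t : (i <= n)%nat -> sqnorm (upd y i t) = sqnorm y - (y i)^2 + t^2.
Proof.
  intros Hi. unfold sqnorm. rewrite sum_sq_upd.
  destruct (Compare_dec.le_lt_dec i n); [ring|lia].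
Qed.

Lemma sqnorm_nonneg y : 0 <= sqnorm y.
Proof. apply cond_pos_sum. intro; apply pow2_ge_0. Qed.

Lemma sqnorm_pos y : punctured n y -> 0 < sqnorm y.
Proof.
  intros [[j [Hj Hy]] _]. apply Rlt_le_trans with ((y j)^2).
  - rewrite <- Rsqr_pow2. apply Rsqr_pos_lt, Hy.
  - apply (sum_f_R0_ge_term (fun k => (y k)^2)); auto. intro; apply pow2_ge_0.
Qed.

Lemma nrm_pos y : punctured n y -> 0 < nrm n y.
Proof. intro; apply sqrt_lt_R0, sqnorm_pos; auto. Qed.

Lemma nrm_sq y : nrm n y * nrm n y = sqnorm y.
Proof. apply sqrt_sqrt, sqnorm_nonneg. Qed.

Lemma smooth_sqnorm : smooth n sqnorm.
Proof.
  apply smooth_sum. intros k _. apply (smooth_ext n (fun z => z k * z k)); [intro; ring|].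
  apply smooth_mult; apply smooth_coord.
Qed.

Definition inv_norm_pow (m : nat) (y : vec) : R := (/ nrm n y)^m.

Lemma line_inv_norm_pow m y i : (i <= n)%nat ->
  line (inv_norm_pow m) y i = fun t => (/ sqrt ((sqnorm y - (y i)^2) + t^2))^m.
Proof.
  intros Hi; apply functional_extensionality; intro t.
  unfold line, inv_norm_pow. rewrite nrm_sqnorm, sqnorm_upd; auto.
Qed.

Lemma derivable_pt_lim_line_inv_norm_pow m y i : punctured n y -> (i <= n)%nat ->
  derivable_pt_lim (line (inv_norm_pow m) y i) (y i) (- INR m * y i * inv_norm_pow (m + 2) y).
Proof.
  intros Hy Hi. rewrite line_inv_norm_pow; auto.
  assert (Hpos : 0 < sqnorm y - y i ^ 2 + y i ^ 2) by (ring_simplify; apply sqnorm_pos; auto).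
  generalize (derivable_pt_lim_inv_sqrt_pow _ _ Hpos m).
  unfold inv_norm_pow. rewrite nrm_sqnorm.
  replace (sqnorm y - y i ^ 2 + y i ^ 2) with (sqnorm y) by ring. auto.
Qed.

Lemma cont_derivable_inv_norm_pow m : cont_derivable n (inv_norm_pow m).
Proof.
  intros y Hy. split.
  - apply (cont_at_comp n (fun s => (/ sqrt s)^m) sqnorm).
    + apply (smooth_cont_derivable _ _ smooth_sqnorm); auto.
    + apply continuity_pt_inv_sqrt_pow, sqnorm_pos; auto.
  - intros i Hi. eexists. apply derivable_pt_lim_line_inv_norm_pow; auto.
Qed.

Lemma smooth_inv_norm_pow m : smooth n (inv_norm_pow m).
Proof.
  intro N. revert m. induction N; intro m; [apply cont_derivable_inv_norm_pow|].
  split; [apply cont_derivable_inv_norm_pow|]. intros i Hi.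
  apply (cont_diff_eq_punct n N (fun z => - INR m * z i * inv_norm_pow (m + 2) z)).
  - intros y Hy. symmetry. apply Deriv_of_lim, derivable_pt_lim_line_inv_norm_pow; auto.
  - apply cont_diff_mult; auto. apply cont_diff_mult; [apply smooth_const|apply smooth_coord].
Qed.

Lemma derivable_pt_lim_line_nrm y i : punctured n y -> (i <= n)%nat ->
  derivable_pt_lim (line (nrm n) y i) (y i) (y i * inv_norm_pow 1 y).
Proof.
  intros Hy Hi.
  replace (line (nrm n) y i) with (fun t => sqrt ((sqnorm y - (y i)^2) + t^2)).
  2:{ apply functional_extensionality; intro t. unfold line. rewrite nrm_sqnorm, sqnorm_upd; auto. }
  assert (Hpos : 0 < sqnorm y - y i ^ 2 + y i ^ 2) by (ring_simplify; apply sqnorm_pos; auto).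
  generalize (derivable_pt_lim_sqrt_shift_sq _ _ Hpos).
  unfold inv_norm_pow. rewrite pow_1, nrm_sqnorm.
  replace (sqnorm y - y i ^ 2 + y i ^ 2) with (sqnorm y) by ring. auto.
Qed.

Lemma cont_derivable_nrm : cont_derivable n (nrm n).
Proof.
  intros y Hy; split.
  - apply (cont_at_comp n sqrt sqnorm).
    + apply (smooth_cont_derivable _ _ smooth_sqnorm); auto.
    + apply continuity_pt_sqrt; apply sqnorm_nonneg.
  - intros i Hi. eexists. apply derivable_pt_lim_line_nrm; auto.
Qed.

Lemma smooth_nrm : smooth n (nrm n).
Proof.
  intros [|N]; [apply cont_derivable_nrm|]. split; [apply cont_derivable_nrm|].
  intros i Hi. apply (cont_diff_eq_punct n N (fun z => z i * inv_norm_pow 1 z)).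
  - intros y Hy. symmetry. apply Deriv_of_lim. apply derivable_pt_lim_line_nrm; auto.
  - apply cont_diff_mult; [apply smooth_coord|apply smooth_inv_norm_pow].
Qed.

End Euclidean_norm.

(** * Euler's identity *)

Lemma MVT_abs (h h' : R -> R) a b :
  (forall c, Rabs (c - a) <= Rabs (b - a) -> derivable_pt_lim h c (h' c)) ->
  exists c, Rabs (c - a) <= Rabs (b - a) /\ h b - h a = h' c * (b - a).
Proof.
  intros Hder. destruct (Rtotal_order a b) as [H|[->|H]].
  - destruct (MVT_cor2 h h' a b H) as [c [E Hc]].
    + intros c Hc; apply Hder. rewrite !Rabs_pos_eq; lra.
    + exists c. rewrite !Rabs_pos_eq; [split|..]; lra.
  - exists b. rewrite Rminus_diag. split; [lra|ring].
  - destruct (MVT_cor2 h h' b a H) as [c [E Hc]].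
    + intros c Hc; apply Hder. rewrite !Rabs_left1; lra.
    + exists c. rewrite !Rabs_left1; [split|..]; lra.
Qed.

Lemma finite_upper_bound (f : nat -> R) m :
  exists M, 0 < M /\ forall j, (j <= m)%nat -> f j <= M.
Proof.
  induction m as [|m [M [HM H]]].
  - exists (Rmax 1 (f 0%nat)); split; [apply Rlt_le_trans with 1; [lra|apply Rmax_l]|].
    intros j Hj. replace j with 0%nat by lia. apply Rmax_r.
  - exists (Rmax M (f (S m))); split; [apply Rlt_le_trans with M; [lra|apply Rmax_l]|].
    intros j Hj. destruct (Nat.eq_dec j (S m)) as [->|]; [apply Rmax_r|].
    apply Rle_trans with M; [apply H; lia|apply Rmax_l].
Qed.

Lemma Rabs_mult_le_of_small p s c eta : 0 < eta -> Rabs p < eta / (Rabs c + 1) ->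
  Rabs (p * (s * c)) <= eta * Rabs s.
Proof.
  intros Heta Hp. assert (Hc := Rabs_pos c). assert (Hs := Rabs_pos s).
  assert (Hpc : Rabs p * Rabs c <= eta).
  { apply Rle_trans with (eta / (Rabs c + 1) * Rabs c).
    - apply Rmult_le_compat_r; lra.
    - apply (Rmult_le_reg_r (Rabs c + 1)); [lra|].
      replace (eta / (Rabs c + 1) * Rabs c * (Rabs c + 1)) with (eta * Rabs c) by (field; lra).
      nra. }
  rewrite !Rabs_mult. replace (Rabs p * (Rabs s * Rabs c)) with (Rabs p * Rabs c * Rabs s) by ring.
  apply Rmult_le_compat_r; auto.
Qed.

Section Directional_derivative.
Variables (n : nat) (G : vec -> R) (y w : vec).
Hypothesis G_cont_derivable : cont_derivable n G.
Hypothesis partial_G_cont : forall j, (j <= n)%nat -> cont_at n (partial j G) y.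
Hypothesis y_punctured : punctured n y.
Hypothesis w_support : forall j, (n < j)%nat -> w j = 0.

Definition shift_first (k : nat) (s : R) : vec :=
  fun j => if Nat.ltb j k then y j + s * w j else y j.

Lemma shift_first_S k s : shift_first (S k) s = upd (shift_first k s) k (y k + s * w k).
Proof.
  apply functional_extensionality; intro j. unfold upd, shift_first.
  destruct (Nat.eq_dec j k) as [->|].
  - replace (Nat.ltb k (S k)) with true; auto. symmetry; apply Nat.ltb_lt; lia.
  - destruct (Nat.ltb_spec j (S k)), (Nat.ltb_spec j k); auto; lia.
Qed.

Lemma shift_first_full s : shift_first (S n) s = fun j => y j + s * w j.
Proof.
  apply functional_extensionality; intro j. unfold shift_first.
  destruct (Nat.ltb_spec j (S n)); auto. rewrite w_support; [ring|lia].
Qed.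

Lemma shift_first_upd_close k s c M d :
  (k <= n)%nat -> (forall j, (j <= n)%nat -> Rabs (w j) <= M) -> Rabs s * M < d ->
  Rabs (c - y k) <= Rabs (s * w k) -> coord_close n y (upd (shift_first k s) k c) d.
Proof.
  intros Hk HM Hs Hc. assert (0 <= Rabs s) by apply Rabs_pos.
  assert (Hsw : forall j, (j <= n)%nat -> Rabs (s * w j) < d).
  { intros j Hj. rewrite Rabs_mult. generalize (HM j Hj); nra. }
  split.
  - intros j Hj. unfold upd. destruct (Nat.eq_dec j k) as [->|].
    + eapply Rle_lt_trans; [exact Hc|auto].
    + unfold shift_first. destruct (Nat.ltb j k).
      * replace (y j + s * w j - y j) with (s * w j) by ring. auto.
      * rewrite Rminus_diag, Rabs_R0. eapply Rle_lt_trans; [apply Rabs_pos|apply (Hsw j Hj)].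
  - intros j Hj. unfold upd, shift_first. destruct (Nat.eq_dec j k); [lia|].
    destruct (Nat.ltb_spec j k); auto; lia.
Qed.

(* Mean value theorem on the segment where only coordinate k moves, plus continuity of
   [partial k G] at [y]. *)
Lemma shift_first_step k : (k <= n)%nat -> forall eta, 0 < eta -> exists d, 0 < d /\
  forall s, Rabs s < d ->
  Rabs (G (shift_first (S k) s) - G (shift_first k s) - s * w k * partial k G y) <= eta * Rabs s.
Proof.
  intros Hk eta Heta.
  destruct (finite_upper_bound (fun j => Rabs (w j)) n) as [M [HM HMb]].
  destruct (punctured_open n y y_punctured) as [dV [HdV HV]].
  assert (Heta' : 0 < eta / (Rabs (w k) + 1))
    by (generalize (Rabs_pos (w k)); intro; apply Rdiv_lt_0_compat; lra).
  destruct (partial_G_cont k Hk _ Heta') as [dc [Hdc Hcont]].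
  set (d := Rmin dV dc).
  exists (d / M); split; [apply Rdiv_lt_0_compat; auto; apply Rmin_pos; auto|]. intros s Hs.
  assert (HsM : Rabs s * M < d).
  { apply (Rmult_lt_compat_r M) in Hs; auto. unfold Rdiv in Hs.
    rewrite Rmult_assoc, Rinv_l, Rmult_1_r in Hs; lra. }
  set (z := shift_first k s).
  assert (Hclose : forall c, Rabs (c - y k) <= Rabs (y k + s * w k - y k) ->
            coord_close n y (upd z k c) d).
  { intros c Hc. apply shift_first_upd_close with M; auto.
    replace (s * w k) with (y k + s * w k - y k) by ring; auto. }
  destruct (MVT_abs (line G z k) (fun c => partial k G (upd z k c)) (y k) (y k + s * w k))
    as [c [Hc E]].
  { intros c Hc.
    assert (Hzc : punctured n (upd z k c))
      by (apply HV, (coord_close_le n _ _ d); [apply Rmin_l|auto]).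
    generalize (derivable_along_partial _ _ _ (proj2 (G_cont_derivable _ Hzc) k Hk)).
    rewrite line_upd, upd_same. auto. }
  unfold line in E. rewrite shift_first_S. fold z.
  rewrite <- (upd_id z k) at 2. replace (z k) with (y k)
    by (unfold z, shift_first; rewrite Nat.ltb_irrefl; auto).
  rewrite E.
  replace (partial k G (upd z k c) * (y k + s * w k - y k) - s * w k * partial k G y)
    with ((partial k G (upd z k c) - partial k G y) * (s * w k)) by ring.
  apply Rabs_mult_le_of_small; auto.
  destruct (coord_close_le n _ _ d dc (Rmin_r _ _) (Hclose c Hc)). apply Hcont; auto.
Qed.

Lemma shift_first_estimate k : (k <= n)%nat -> forall eta, 0 < eta -> exists d, 0 < d /\
  forall s, Rabs s < d ->
  Rabs (G (shift_first (S k) s) - G y - s * sum_f_R0 (fun j => w j * partial j G y) k)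
    <= eta * INR (S k) * Rabs s.
Proof.
  induction k; intros Hk eta Heta.
  - destruct (shift_first_step 0 Hk eta Heta) as [d [Hd H]]. exists d; split; auto.
    intros s Hs. change (G y) with (G (shift_first 0 s)). cbn [sum_f_R0].
    change (INR 1) with 1. rewrite Rmult_1_r, <- Rmult_assoc. apply H; auto.
  - destruct (IHk ltac:(lia) eta Heta) as [d1 [Hd1 H1]].
    destruct (shift_first_step (S k) Hk eta Heta) as [d2 [Hd2 H2]].
    exists (Rmin d1 d2); split; [apply Rmin_pos; auto|]. intros s Hs.
    assert (A1 := H1 s ltac:(eapply Rlt_le_trans; [exact Hs|apply Rmin_l])).
    assert (A2 := H2 s ltac:(eapply Rlt_le_trans; [exact Hs|apply Rmin_r])).
    rewrite tech5.
    replace (G (shift_first (S (S k)) s) - G y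
             - s * (sum_f_R0 (fun j => w j * partial j G y) k + w (S k) * partial (S k) G y))
      with ((G (shift_first (S k) s) - G y - s * sum_f_R0 (fun j => w j * partial j G y) k)
            + (G (shift_first (S (S k)) s) - G (shift_first (S k) s)
               - s * w (S k) * partial (S k) G y)) by ring.
    eapply Rle_trans; [apply Rabs_triang|]. rewrite (S_INR (S k)). nra.
Qed.

Lemma derivable_pt_lim_directional :
  derivable_pt_lim (fun s => G (fun j => y j + s * w j)) 0
    (sum_f_R0 (fun j => w j * partial j G y) n).
Proof.
  intros eps Heps.
  assert (HN : 0 < INR (S n)) by (apply lt_0_INR; lia).
  set (eta := eps / (2 * INR (S n))).
  assert (Heta : 0 < eta) by (apply Rdiv_lt_0_compat; lra).
  destruct (shift_first_estimate n (Nat.le_refl n) eta Heta) as [d [Hd H]].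
  exists (mkposreal d Hd). intros h Hh0 Hh. simpl in Hh. specialize (H h Hh).
  rewrite <- !shift_first_full, Rplus_0_l.
  replace (shift_first (S n) 0) with y
    by (rewrite shift_first_full; apply functional_extensionality; intro; ring).
  replace ((G (shift_first (S n) h) - G y) / h - sum_f_R0 (fun j => w j * partial j G y) n)
    with ((G (shift_first (S n) h) - G y - h * sum_f_R0 (fun j => w j * partial j G y) n) / h)
    by (field; auto).
  assert (Hh1 : 0 < Rabs h) by (apply Rabs_pos_lt; auto).
  unfold Rdiv. rewrite Rabs_mult, Rabs_inv.
  apply Rle_lt_trans with (eta * INR (S n) * Rabs h * / Rabs h).
  - apply Rmult_le_compat_r; [left; apply Rinv_0_lt_compat|]; auto.
  - replace (eta * INR (S n) * Rabs h * / Rabs h) with (eps / 2) by (unfold eta; field; lra).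
    lra.
Qed.

End Directional_derivative.

Section Homogeneity.
Variable n : nat.

Definition scale (l : R) (y : vec) : vec := fun j => l * y j.

Definition homogeneous_neg (m : nat) (F : vec -> R) : Prop :=
  forall y l, punctured n y -> 0 < l -> F (scale l y) = F y / l^m.

Lemma upd_scale y i l t : l <> 0 -> upd (scale l y) i t = scale l (upd y i (t / l)).
Proof.
  intros Hl. apply functional_extensionality; intro j. unfold upd, scale.
  destruct (Nat.eq_dec j i); auto. field; auto.
Qed.

Lemma homogeneous_neg_partial m F i : (i <= n)%nat ->
  homogeneous_neg m F -> cont_derivable n F -> homogeneous_neg (S m) (partial i F).
Proof.
  intros Hi HF S0 y l Hy Hl.
  unfold partial at 1. fold (line F (scale l y) i).
  assert (E : near (scale l y i) (fun t => line F (scale l y) i t = line F y i (t / l) / l^m)).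
  { destruct (near_punctured_line n y i Hy Hi) as [d [Hd Hd']]. exists (l * d); split; [nra|].
    intros t Ht. unfold line. rewrite upd_scale; [|lra]. apply HF; auto.
    apply Hd'. unfold scale in Ht. replace (t / l - y i) with ((t - l * y i) / l) by (field; lra).
    unfold Rdiv; rewrite Rabs_mult, Rabs_inv, (Rabs_pos_eq l); [|lra].
    apply (Rmult_lt_reg_r l); [lra|]. rewrite Rmult_assoc, Rinv_l, Rmult_1_r; lra. }
  rewrite (Deriv_near _ _ _ E). apply Deriv_of_lim.
  destruct (S0 y Hy) as [_ D]. specialize (D i Hi). apply derivable_along_partial in D.
  replace (partial i F y / l ^ S m) with ((partial i F y * / l) * / l^m)
    by (simpl; field; split; [apply pow_nonzero|]; lra).
  apply (derivable_pt_lim_scal_right (fun t => line F y i (t / l))).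
  apply (derivable_pt_lim_comp (fun t => t / l) (line F y i)).
  - replace (/ l) with (1 * / l) by ring. apply (derivable_pt_lim_scal_right (fun t => t)).
    apply derivable_pt_lim_id.
  - replace (scale l y i / l) with (y i) by (unfold scale; field; lra). auto.
Qed.

(* Differentiate [s |-> G ((1 + s) y)] at [s = 0]. *)
Lemma euler_homogeneous m G y : homogeneous_neg m G -> cont_diff n 1 G -> punctured n y ->
  sum_f_R0 (fun j => y j * partial j G y) n = - INR m * G y.
Proof.
  intros HG [G0 G1] Hy.
  assert (D := derivable_pt_lim_directional n G y y G0
                 (fun j Hj => proj1 (G1 j Hj y Hy)) Hy (proj2 Hy)).
  apply (uniqueness_limite (fun s => G y / (1 + s)^m) 0); [|apply derivable_pt_lim_div_pow_shift].
  eapply derivable_pt_lim_near; [|exact D].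
  exists 1; split; [lra|]. intros t Ht. rewrite Rminus_0_r in Ht.
  replace (fun j => y j + t * y j) with (scale (1 + t) y)
    by (apply functional_extensionality; intro; unfold scale; ring).
  apply HG; auto. apply Rabs_def2 in Ht; lra.
Qed.

End Homogeneity.

(** * Symmetry of second derivatives *)

Definition plane (y : vec) (a b : nat) (p q : R) : vec := upd (upd y a p) b q.

Lemma plane_center y a b : plane y a b (y a) (y b) = y.
Proof. unfold plane. rewrite !upd_id. reflexivity. Qed.

Lemma plane_swap y a b p q : a <> b -> plane y a b p q = plane y b a q p.
Proof. intros; unfold plane; apply upd_comm; auto. Qed.

Lemma plane_fst y a b p q : a <> b -> plane y a b p q a = p.
Proof. intro; unfold plane. rewrite upd_other, upd_same; auto. Qed.

Lemma plane_snd y a b p q : plane y a b p q b = q.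
Proof. apply upd_same. Qed.

Lemma line_plane_fst F y a b p q : a <> b ->
  line F (plane y a b p q) a = fun s => F (plane y a b s q).
Proof.
  intro; apply functional_extensionality; intro s. unfold line.
  rewrite !(plane_swap y a b); auto. unfold plane at 1. rewrite upd_upd; auto.
Qed.

Lemma line_plane_snd F y a b p q : line F (plane y a b p q) b = fun t => F (plane y a b p t).
Proof. apply functional_extensionality; intro t. unfold line, plane. rewrite upd_upd; auto. Qed.

Lemma plane_close n y a b p q d : (a <= n)%nat -> (b <= n)%nat -> 0 < d ->
  Rabs (p - y a) < d -> Rabs (q - y b) < d -> coord_close n y (plane y a b p q) d.
Proof.
  intros Ha Hb Hd Hp Hq. unfold plane, upd. split.
  - intros k Hk. destruct (Nat.eq_dec k b) as [->|]; auto.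
    destruct (Nat.eq_dec k a) as [->|]; auto. rewrite Rminus_diag, Rabs_R0; auto.
  - intros k Hk. destruct (Nat.eq_dec k b); [lia|]. destruct (Nat.eq_dec k a); [lia|auto].
Qed.

Section Schwarz.
Import Coquelicot.Coquelicot.

Lemma Derive_of_lim g t l : derivable_pt_lim g t l -> Derive g t = l.
Proof. intro H. apply is_derive_unique, is_derive_Reals; auto. Qed.

Variables (n : nat) (G : vec -> R) (y : vec) (a b : nat) (d : R).
Hypotheses (Hab : a <> b) (Ha : (a <= n)%nat) (Hb : (b <= n)%nat).
Hypotheses (G_cd : cont_derivable n G) (partial_G_cd : cont_derivable n (partial b G)).
Hypothesis Hd : 0 < d.
Hypothesis box_punctured : forall z, coord_close n y z d -> punctured n z.

Let box_plane p q : Rabs (p - y a) < d -> Rabs (q - y b) < d -> punctured n (plane y a b p q).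
Proof. intros; apply box_punctured, plane_close; auto. Qed.

Lemma derivable_plane_snd p q : Rabs (p - y a) < d -> Rabs (q - y b) < d ->
  derivable_pt_lim (fun t => G (plane y a b p t)) q (partial b G (plane y a b p q)).
Proof.
  intros Hp Hq. destruct (G_cd _ (box_plane p q Hp Hq)) as [_ D].
  generalize (derivable_along_partial _ _ _ (D b Hb)).
  rewrite line_plane_snd, plane_snd. auto.
Qed.

Lemma derivable_plane_fst p q : Rabs (p - y a) < d -> Rabs (q - y b) < d ->
  derivable_pt_lim (fun s => G (plane y a b s q)) p (partial a G (plane y a b p q)).
Proof.
  intros Hp Hq. destruct (G_cd _ (box_plane p q Hp Hq)) as [_ D].
  generalize (derivable_along_partial _ _ _ (D a Ha)).
  rewrite line_plane_fst, plane_fst; auto.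
Qed.

Lemma derivable_plane_mixed p q : Rabs (p - y a) < d -> Rabs (q - y b) < d ->
  derivable_pt_lim (fun s => Derive (fun t => G (plane y a b s t)) q) p
    (partial a (partial b G) (plane y a b p q)).
Proof.
  intros Hp Hq. destruct (partial_G_cd _ (box_plane p q Hp Hq)) as [_ D].
  generalize (derivable_along_partial _ _ _ (D a Ha)).
  rewrite line_plane_fst, plane_fst; auto.
  apply derivable_pt_lim_near.
  apply near_mono with (fun s => Rabs (s - y a) < d).
  - intros s Hs. symmetry. apply Derive_of_lim, derivable_plane_snd; auto.
  - exists (d - Rabs (p - y a)); split; [lra|]. intros s Hs.
    replace (s - y a) with ((s - p) + (p - y a)) by ring.
    generalize (Rabs_triang (s - p) (p - y a)); lra.
Qed.

Lemma plane_mixed_continuous : cont_at n (partial a (partial b G)) y ->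
  continuity_2d_pt (fun u v => Derive (fun s => Derive (fun t => G (plane y a b s t)) v) u)
    (y a) (y b).
Proof.
  intros C eps. destruct (C eps (cond_pos eps)) as [dc [Hdc Hc]].
  assert (Hm : 0 < Rmin d dc) by (apply Rmin_pos; auto).
  exists (mkposreal _ Hm). intros u v Hu Hv. simpl in Hu, Hv.
  assert (Hc0 : Rabs (y a - y a) < d /\ Rabs (y b - y b) < d)
    by (rewrite !Rminus_diag, Rabs_R0; auto).
  rewrite (Derive_of_lim _ _ _ (derivable_plane_mixed (y a) (y b) (proj1 Hc0) (proj2 Hc0))).
  rewrite (Derive_of_lim _ _ _ (derivable_plane_mixed u v
    ltac:(eapply Rlt_le_trans; [exact Hu|apply Rmin_l])
    ltac:(eapply Rlt_le_trans; [exact Hv|apply Rmin_l]))).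
  rewrite plane_center.
  destruct (plane_close n y a b u v dc Ha Hb Hdc) as [H1 H2];
    try (eapply Rlt_le_trans; [eassumption|apply Rmin_r]).
  apply Hc; auto.
Qed.

End Schwarz.

Section Symmetry_of_second_derivatives.
Import Coquelicot.Coquelicot.

Lemma continuity_2d_pt_swap f x y :
  continuity_2d_pt f x y -> continuity_2d_pt (fun u v => f v u) y x.
Proof. intros H eps. destruct (H eps) as [d Hd]. exists d. intros u v Hu Hv; apply Hd; auto. Qed.

(* Coquelicot's two-variable [Schwarz], applied to [G] restricted to the (i, j)-plane
   through [y]. *)
Lemma partial_comm n G y i j : cont_diff n 2 G -> punctured n y ->
  (i <= n)%nat -> (j <= n)%nat -> partial i (partial j G) y = partial j (partial i G) y.
Proof.
  intros [G0 G1] Hy Hi Hj. destruct (Nat.eq_dec i j) as [->|Hij]; auto.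
  destruct (G1 i Hi) as [Gi0 Gi1], (G1 j Hj) as [Gj0 Gj1].
  destruct (punctured_open n y Hy) as [d [Hd Hbox]].
  pose (f u v := G (plane y i j u v)).
  assert (Hswap : forall u v, G (plane y j i v u) = f u v)
    by (intros; unfold f; rewrite plane_swap; auto).
  assert (Hsw1 : forall u, (fun z => Derive (fun t => G (plane y j i z t)) u)
                         = (fun z => Derive (fun t => f t z) u)).
  { intro u. apply functional_extensionality; intro z. f_equal.
    apply functional_extensionality; intro t. auto. }
  assert (C0 : Rabs (y i - y i) < d /\ Rabs (y j - y j) < d)
    by (rewrite !Rminus_diag, Rabs_R0; auto).
  pose proof (derivable_plane_mixed n G y i j d Hij Hi Hj G0 Gj0 Hd Hbox) as Mij.
  pose proof (derivable_plane_mixed n G y j i d (not_eq_sym Hij) Hj Hi G0 Gi0 Hd Hbox) as Mji.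
  assert (E1 := Derive_of_lim _ _ _ (Mij _ _ (proj1 C0) (proj2 C0))).
  assert (E2 := Derive_of_lim _ _ _ (Mji _ _ (proj2 C0) (proj1 C0))).
  rewrite plane_center in E1, E2. rewrite <- E1, <- E2, Hsw1.
  apply (Schwarz f).
  - exists (mkposreal d Hd). intros u v Hu Hv; simpl in Hu, Hv. repeat split.
    + eexists; apply is_derive_Reals, (derivable_plane_fst n G y i j d Hij Hi Hj G0 Hd Hbox); auto.
    + eexists; apply is_derive_Reals, (derivable_plane_snd n G y i j d Hi Hj G0 Hd Hbox); auto.
    + eexists; apply is_derive_Reals, Mij; auto.
    + rewrite <- Hsw1. eexists; apply is_derive_Reals, Mji; auto.
  - apply (plane_mixed_continuous n G y i j d); auto. apply (Gj1 i Hi y Hy).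
  - pose (g u v := Derive (fun z => Derive (fun t => G (plane y j i z t)) u) v).
    apply (continuity_2d_pt_ext g).
    + intros u v. unfold g. rewrite Hsw1. auto.
    + apply (continuity_2d_pt_swap (fun v u => g u v)).
      apply (plane_mixed_continuous n G y j i d); auto. apply (Gi1 j Hj y Hy).
Qed.

End Symmetry_of_second_derivatives.

(** * Functions on the sphere *)

Section Homogeneous_extension.
Variable n : nat.

Definition sphere_proj (y : vec) : vec := fun j => if Nat.leb j n then y j / nrm n y else 0.

Lemma ext_sphere_proj u y : ext n u y = u (sphere_proj y).
Proof. reflexivity. Qed.

Lemma sqnorm_scale y l : sqnorm n (scale l y) = l^2 * sqnorm n y.
Proof. unfold sqnorm, scale. rewrite scal_sum. apply sum_eq; intros; ring. Qed.

Lemma nrm_scale y l : 0 < l -> nrm n (scale l y) = l * nrm n y.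
Proof.
  intros Hl. rewrite !nrm_sqnorm, sqnorm_scale, sqrt_mult, sqrt_pow2; try lra.
  - apply pow2_ge_0.
  - apply sqnorm_nonneg.
Qed.

Lemma sphere_proj_punctured y : punctured n y -> sphere_proj y = scale (/ nrm n y) y.
Proof.
  intros [_ H]. apply functional_extensionality; intro j. unfold sphere_proj, scale.
  destruct (Nat.leb_spec j n); [unfold Rdiv; ring|]. rewrite H; auto; ring.
Qed.

Lemma sphere_proj_scale y l : punctured n y -> 0 < l -> sphere_proj (scale l y) = sphere_proj y.
Proof.
  intros Hy Hl. apply functional_extensionality; intro j. unfold sphere_proj.
  destruct (Nat.leb j n); auto. rewrite nrm_scale; auto. unfold scale. field.
  split; [apply Rgt_not_eq, nrm_pos|]; auto; lra.
Qed.

Lemma homogeneous_ext u : homogeneous_neg n 0 (ext n u).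
Proof.
  intros y l Hy Hl. rewrite !ext_sphere_proj, sphere_proj_scale; auto. simpl; field.
Qed.

Lemma on_sphere_punctured x : on_sphere n x -> punctured n x.
Proof.
  intros [H1 H2]. split; auto. apply NNPP. intro H.
  assert (E : sum_f_R0 (fun j => x j ^ 2) n = 0).
  { apply sum_eq_R0. intros i Hi. destruct (Req_dec (x i) 0) as [->|]; [ring|].
    exfalso; apply H; exists i; auto. }
  lra.
Qed.

Lemma on_sphere_sqnorm x : on_sphere n x -> sqnorm n x = 1.
Proof. intros [H _]; exact H. Qed.

Lemma on_sphere_nrm x : on_sphere n x -> nrm n x = 1.
Proof. intros H; rewrite nrm_sqnorm, on_sphere_sqnorm; auto; apply sqrt_1. Qed.

Lemma sphere_proj_on_sphere x : on_sphere n x -> sphere_proj x = x.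
Proof.
  intros H. apply functional_extensionality; intro j. unfold sphere_proj.
  rewrite on_sphere_nrm; auto. destruct (Nat.leb_spec j n); [field|].
  destruct H as [_ H]. rewrite H; auto.
Qed.

Lemma on_sphere_sphere_proj y : punctured n y -> on_sphere n (sphere_proj y).
Proof.
  intros Hy. split.
  - rewrite sphere_proj_punctured; auto. change (sqnorm n (scale (/ nrm n y) y) = 1).
    rewrite sqnorm_scale, <- nrm_sq. assert (0 < nrm n y) by (apply nrm_pos; auto).
    field. lra.
  - intros j Hj. unfold sphere_proj. destruct (Nat.leb_spec j n); auto; lia.
Qed.

Lemma ext_on_sphere f x : on_sphere n x -> ext n f x = f x.
Proof. intros H; rewrite ext_sphere_proj, sphere_proj_on_sphere; auto. Qed.

Lemma ext_eq_punct f g : (forall x, on_sphere n x -> f x = g x) -> eq_punct n (ext n f) (ext n g).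
Proof. intros H y Hy. rewrite !ext_sphere_proj. apply H, on_sphere_sphere_proj; auto. Qed.

Definition ext_smooth (f : vec -> R) : Prop := smooth n (ext n f).

(* On the sphere, [sphere_grad i f] is the i-th Euclidean component of the spherical
   gradient of [f]. *)
Definition sphere_grad (i : nat) (f : vec -> R) : vec -> R := partial i (ext n f).

Lemma ext_mulx i f y : (i <= n)%nat -> ext n (mulx i f) y = y i * inv_norm_pow n 1 y * ext n f y.
Proof.
  intros Hi. rewrite !ext_sphere_proj. unfold mulx, sphere_proj at 1, inv_norm_pow.
  destruct (Nat.leb_spec i n); [|lia]. unfold Rdiv. ring.
Qed.

Lemma ext_sphere_grad i f : (i <= n)%nat -> ext_smooth f ->
  eq_punct n (ext n (sphere_grad i f)) (fun y => nrm n y * partial i (ext n f) y).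
Proof.
  intros Hi Hf y Hy. assert (0 < nrm n y) by (apply nrm_pos; auto).
  rewrite ext_sphere_proj. unfold sphere_grad. rewrite sphere_proj_punctured; auto.
  rewrite (homogeneous_neg_partial n 0 (ext n f) i Hi (homogeneous_ext f)
             (smooth_cont_derivable _ _ Hf)); auto.
  - simpl. field. lra.
  - apply Rinv_0_lt_compat; auto.
Qed.

Lemma ext_lapS f : ext_smooth f -> eq_punct n (ext n (lapS n f))
  (fun y => sqnorm n y * sum_f_R0 (fun j => partial j (partial j (ext n f)) y) n).
Proof.
  intros Hf y Hy. assert (Hr : 0 < nrm n y) by (apply nrm_pos; auto).
  rewrite ext_sphere_proj. unfold lapS. rewrite sphere_proj_punctured; auto.
  rewrite scal_sum. apply sum_eq. intros j Hj.
  assert (H2 : homogeneous_neg n 2 (partial j (partial j (ext n f)))).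
  { apply homogeneous_neg_partial; auto.
    - apply homogeneous_neg_partial; auto using homogeneous_ext, smooth_cont_derivable.
    - apply smooth_cont_derivable, smooth_partial; auto. }
  rewrite H2; auto; [|apply Rinv_0_lt_compat; auto].
  rewrite <- nrm_sq. simpl. field. lra.
Qed.

Lemma ext_smooth_mulx i f : (i <= n)%nat -> ext_smooth f -> ext_smooth (mulx i f).
Proof.
  intros Hi Hf. apply (smooth_ext n (fun y => y i * inv_norm_pow n 1 y * ext n f y)).
  - intro; rewrite ext_mulx; auto.
  - apply smooth_mult; auto. apply smooth_mult; [apply smooth_coord|apply smooth_inv_norm_pow].
Qed.

Lemma ext_smooth_sphere_grad i f : (i <= n)%nat -> ext_smooth f -> ext_smooth (sphere_grad i f).
Proof.
  intros Hi Hf. eapply smooth_eq_punct; [apply eq_punct_sym, ext_sphere_grad; auto|].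
  apply smooth_mult; [apply smooth_nrm|apply smooth_partial; auto].
Qed.

Lemma ext_smooth_lapS f : ext_smooth f -> ext_smooth (lapS n f).
Proof.
  intros Hf. eapply smooth_eq_punct; [apply eq_punct_sym, ext_lapS; auto|].
  apply smooth_mult; [apply smooth_sqnorm|]. apply smooth_sum. intros j Hj.
  apply smooth_partial, smooth_partial; auto.
Qed.

Lemma ext_smooth_lin a b f g : ext_smooth f -> ext_smooth g ->
  ext_smooth (fun x => a * f x + b * g x).
Proof.
  intros Hf Hg. apply (smooth_plus n (fun y => a * ext n f y) (fun y => b * ext n g y));
    apply smooth_scal; auto.
Qed.

Definition GJMS_coef (k : nat) : R := (INR n - 2 * INR k) * (INR n + 2 * INR k - 2) / 4.

Lemma GJMS_S u k x : GJMS n (S k) u x = - lapS n (GJMS n k u) x + GJMS_coef (S k) * GJMS n k u x.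
Proof. reflexivity. Qed.

Lemma ext_smooth_GJMS u k : ext_smooth u -> ext_smooth (GJMS n k u).
Proof.
  intros Hu. induction k; [exact Hu|].
  apply (smooth_ext n (fun y => (-1) * ext n (lapS n (GJMS n k u)) y
                               + GJMS_coef (S k) * ext n (GJMS n k u) y)).
  - intro y; unfold ext; rewrite GJMS_S; ring.
  - apply ext_smooth_lin; auto. apply ext_smooth_lapS; auto.
Qed.

End Homogeneous_extension.

Lemma sum_f_R0_affine_gen (a b c d : R) (u v w z : nat -> R) i m :
  sum_f_R0 (fun j => a + b * u j + c * v j + d * w j + (if Nat.eq_dec j i then z j else 0)) m =
  a * INR (S m) + b * sum_f_R0 u m + c * sum_f_R0 v m + d * sum_f_R0 w m
  + (if Compare_dec.le_lt_dec i m then z i else 0).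
Proof.
  induction m.
  - destruct (Compare_dec.le_lt_dec i 0); cbn [sum_f_R0];
      destruct (Nat.eq_dec 0 i); subst; try lia; simpl; ring.
  - rewrite !tech5, IHm, (S_INR (S m)).
    destruct (Nat.eq_dec (S m) i), (Compare_dec.le_lt_dec i m),
      (Compare_dec.le_lt_dec i (S m)); subst; try lia; ring.
Qed.

Lemma sum_f_R0_affine (a b c d : R) (u v w z : nat -> R) i m : (i <= m)%nat ->
  sum_f_R0 (fun j => a + b * u j + c * v j + d * w j + (if Nat.eq_dec j i then z j else 0)) m =
  a * INR (S m) + b * sum_f_R0 u m + c * sum_f_R0 v m + d * sum_f_R0 w m + z i.
Proof.
  intros H; rewrite sum_f_R0_affine_gen. destruct (Compare_dec.le_lt_dec i m); auto; lia.
Qed.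

Lemma sum_f_R0_lin a b (u v : nat -> R) m :
  sum_f_R0 (fun j => a * u j + b * v j) m = a * sum_f_R0 u m + b * sum_f_R0 v m.
Proof. induction m; [simpl; ring|]. rewrite !tech5, IHm. ring. Qed.

Section Sphere_identities.
Variable n : nat.

Lemma Deriv2_mult_line F x j (a a1 : R -> R) a2 : smooth n F -> punctured n x -> (j <= n)%nat ->
  near (x j) (fun t => derivable_pt_lim a t (a1 t)) -> derivable_pt_lim a1 (x j) a2 ->
  Deriv (Deriv (fun t => a t * line F x j t)) (x j)
  = a2 * F x + 2 * a1 (x j) * partial j F x + a (x j) * partial j (partial j F) x.
Proof.
  intros HF Hx Hj Ha Ha1.
  rewrite (Deriv2_mult a (line F x j) a1 (Deriv (line F x j)) (x j) a2
             (partial j (partial j F) x)); auto.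
  - unfold line at 1. rewrite upd_id. reflexivity.
  - apply near_and; auto.
    eapply near_mono; [|apply (near_punctured_line n x j Hx Hj)]. intros t Ht.
    generalize (derivable_along_partial _ _ _ (smooth_derivable_along n F _ j HF Ht Hj)).
    rewrite line_upd, upd_same, partial_upd. auto.
  - rewrite <- line_partial. apply derivable_along_partial, (smooth_derivable_along n); auto.
    apply smooth_partial; auto.
Qed.

Lemma sum_sphere_grad f x : ext_smooth n f -> punctured n x ->
  sum_f_R0 (fun j => x j * sphere_grad n j f x) n = 0.
Proof.
  intros Hf Hx. unfold sphere_grad.
  rewrite (euler_homogeneous n 0 (ext n f) x); auto using homogeneous_ext. simpl; ring.
Qed.

Lemma lapS_eq_punct f g x : eq_punct n (ext n f) (ext n g) -> punctured n x ->
  lapS n f x = lapS n g x.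
Proof.
  intros E Hx. unfold lapS. apply sum_eq. intros j Hj.
  apply (eq_punct_partial n); auto. apply (eq_punct_partial n); auto.
Qed.

Lemma lapS_lin a b f g x : ext_smooth n f -> ext_smooth n g -> punctured n x ->
  lapS n (fun z => a * f z + b * g z) x = a * lapS n f x + b * lapS n g x.
Proof.
  intros Hf Hg Hx. unfold lapS. rewrite <- sum_f_R0_lin. apply sum_eq. intros j Hj.
  change (ext n (fun z => a * f z + b * g z)) with (fun y => a * ext n f y + b * ext n g y).
  rewrite (eq_punct_partial n _ (fun y => a * partial j (ext n f) y + b * partial j (ext n g) y));
    auto.
  - apply partial_lin; apply (smooth_derivable_along n); auto; apply smooth_partial; auto.
  - intros y Hy. apply partial_lin; apply (smooth_derivable_along n); auto.
Qed.

Lemma sphere_grad_lin i a b f g x : (i <= n)%nat -> ext_smooth n f -> ext_smooth n g ->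
  punctured n x ->
  sphere_grad n i (fun z => a * f z + b * g z) x
  = a * sphere_grad n i f x + b * sphere_grad n i g x.
Proof.
  intros Hi Hf Hg Hx. apply partial_lin; apply (smooth_derivable_along n); auto.
Qed.

Lemma line_ext_mulx i f x j : (i <= n)%nat -> (j <= n)%nat -> on_sphere n x ->
  line (ext n (mulx i f)) x j
  = fun t => upd x j t i / sqrt ((1 - x j ^ 2) + t^2) * line (ext n f) x j t.
Proof.
  intros Hi Hj Hx. apply functional_extensionality; intro t; unfold line.
  rewrite ext_mulx; auto. unfold inv_norm_pow.
  rewrite pow_1, nrm_sqnorm, sqnorm_upd, on_sphere_sqnorm; auto.
Qed.

Lemma partial2_ext_mulx i f x j : (i <= n)%nat -> (j <= n)%nat -> on_sphere n x ->
  ext_smooth n f ->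
  partial j (partial j (ext n (mulx i f))) x =
    (- x i + 3 * x i * x j ^ 2 - (if Nat.eq_dec j i then 2 * x j else 0)) * ext n f x
    + 2 * ((if Nat.eq_dec j i then 1 else 0) - x i * x j) * partial j (ext n f) x
    + x i * partial j (partial j (ext n f)) x.
Proof.
  intros Hi Hj Hx Hf. rewrite partial2_Deriv2, line_ext_mulx; auto.
  assert (Hp := on_sphere_punctured n x Hx).
  set (A := 1 - x j ^ 2).
  assert (HA0 : 0 < A + x j ^ 2) by (unfold A; lra).
  assert (Hs : / sqrt (A + x j ^ 2) = 1)
    by (unfold A; ring_simplify (1 - x j ^ 2 + x j ^ 2); rewrite sqrt_1; apply Rinv_1).
  destruct (Nat.eq_dec j i) as [->|Hne].
  - replace (fun t => upd x i t i / sqrt (A + t^2) * line (ext n f) x i t)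
      with (fun t => t / sqrt (A + t^2) * line (ext n f) x i t)
      by (apply functional_extensionality; intro t; rewrite upd_same; auto).
    rewrite (Deriv2_mult_line (ext n f) x i _ (fun t => A * (/ sqrt (A + t^2))^3)
               (- A * INR 3 * x i * (/ sqrt (A + x i^2))^(3 + 2))); auto.
    + unfold Rdiv. rewrite Hs, !pow1. unfold A. simpl. ring.
    + eapply near_mono; [|apply (near_shift_sq_pos A (x i) HA0)].
      intros; apply derivable_pt_lim_div_sqrt_shift_sq; auto.
    + apply derivable_pt_lim_scal_inv_sqrt_pow; auto.
  - replace (fun t => upd x j t i / sqrt (A + t^2) * line (ext n f) x j t)
      with (fun t => x i * (/ sqrt (A + t^2))^1 * line (ext n f) x j t)
      by (apply functional_extensionality; intro t; rewrite upd_other, pow_1; auto).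
    rewrite (Deriv2_mult_line (ext n f) x j _
               (fun t => - x i * INR 1 * t * (/ sqrt (A + t^2))^(1 + 2))
               (- x i * INR 1 * (/ sqrt (A + x j^2))^(1 + 2)
                - - x i * INR 1 * INR (1 + 2) * x j^2 * (/ sqrt (A + x j^2))^(1 + 2 + 2)));
      auto.
    + rewrite Hs, !pow1. simpl. ring.
    + eapply near_mono; [|apply (near_shift_sq_pos A (x j) HA0)].
      intros; apply derivable_pt_lim_scal_inv_sqrt_pow; auto.
    + apply derivable_pt_lim_lin_inv_sqrt_pow; auto.
Qed.

Lemma lapS_mulx i f x : (i <= n)%nat -> ext_smooth n f -> on_sphere n x ->
  lapS n (mulx i f) x = x i * lapS n f x - INR n * x i * f x + 2 * sphere_grad n i f x.
Proof.
  intros Hi Hf Hx. assert (Hp := on_sphere_punctured n x Hx).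
  unfold lapS at 1.
  rewrite (sum_eq _ (fun j => - x i * ext n f x + (3 * x i * ext n f x) * (x j ^ 2)
       + (- 2 * x i) * (x j * partial j (ext n f) x) + x i * partial j (partial j (ext n f)) x
       + (if Nat.eq_dec j i then - 2 * x j * ext n f x + 2 * partial j (ext n f) x else 0))).
  2:{ intros j Hj. rewrite partial2_ext_mulx; auto. destruct (Nat.eq_dec j i); ring. }
  rewrite sum_f_R0_affine; auto.
  assert (Euler := sum_sphere_grad f x Hf Hp). unfold sphere_grad in Euler.
  fold (sqnorm n x). rewrite on_sphere_sqnorm, Euler, ext_on_sphere; auto.
  unfold lapS, sphere_grad. rewrite S_INR. ring.
Qed.

Lemma partial_sqnorm i y : (i <= n)%nat -> partial i (sqnorm n) y = 2 * y i.
Proof.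
  intros Hi. apply Deriv_of_lim.
  replace (fun t => sqnorm n (upd y i t)) with (fun t => (sqnorm n y - y i ^ 2) + t^2).
  - apply derivable_pt_lim_shift_sq.
  - apply functional_extensionality; intro t. rewrite sqnorm_upd; auto.
Qed.

Lemma partial2_ext_sphere_grad i f x j : (i <= n)%nat -> (j <= n)%nat -> on_sphere n x ->
  ext_smooth n f ->
  partial j (partial j (ext n (sphere_grad n i f))) x =
    (1 - x j ^ 2) * partial i (ext n f) x + 2 * x j * partial j (partial i (ext n f)) x
    + partial j (partial j (partial i (ext n f))) x.
Proof.
  intros Hi Hj Hx Hf. rewrite partial2_Deriv2.
  assert (Hp := on_sphere_punctured n x Hx).
  set (A := 1 - x j ^ 2).
  assert (HA : A + x j ^ 2 = 1) by (unfold A; ring).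
  assert (HA0 : 0 < A + x j ^ 2) by lra.
  set (Fi := partial i (ext n f)).
  assert (SFi : smooth n Fi) by (apply smooth_partial; auto).
  rewrite (Deriv2_near _ (fun t => sqrt (A + t^2) * line Fi x j t)).
  2:{ eapply near_mono; [|apply (near_punctured_line n x j Hp Hj)]. intros t Ht. unfold line.
      rewrite ext_sphere_grad; auto. rewrite nrm_sqnorm, sqnorm_upd, on_sphere_sqnorm; auto. }
  rewrite (Deriv2_mult_line Fi x j _ (fun t => t * / sqrt (A + t^2))
             (A * (/ sqrt (A + x j^2))^3)); auto.
  - rewrite HA, sqrt_1, Rinv_1. unfold A. ring.
  - eapply near_mono; [|apply (near_shift_sq_pos A (x j) HA0)].
    intros; apply derivable_pt_lim_sqrt_shift_sq; auto.
  - apply derivable_pt_lim_div_sqrt_shift_sq; auto.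
Qed.

Lemma lapS_sphere_grad_expand i f x : (i <= n)%nat -> ext_smooth n f -> on_sphere n x ->
  lapS n (sphere_grad n i f) x = (INR n - 2) * sphere_grad n i f x
    + sum_f_R0 (fun j => partial i (partial j (partial j (ext n f))) x) n.
Proof.
  intros Hi Hf Hx. assert (Hp := on_sphere_punctured n x Hx).
  set (F := ext n f).
  assert (SFi : smooth n (partial i F)) by (apply smooth_partial; auto).
  unfold lapS at 1.
  rewrite (sum_eq _ (fun j => partial i F x + (- partial i F x) * (x j ^ 2)
       + 2 * (x j * partial j (partial i F) x) + 1 * partial j (partial j (partial i F)) x
       + (if Nat.eq_dec j i then 0 else 0))).
  2:{ intros j Hj. rewrite partial2_ext_sphere_grad; auto.
      destruct (Nat.eq_dec j i); fold F; ring. }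
  rewrite sum_f_R0_affine; auto. fold (sqnorm n x). rewrite on_sphere_sqnorm; auto.
  rewrite (euler_homogeneous n 1 (partial i F) x); auto.
  2:{ apply homogeneous_neg_partial; [auto|apply homogeneous_ext|apply smooth_cont_derivable, Hf]. }
  rewrite (sum_eq _ (fun j => partial i (partial j (partial j F)) x)).
  2:{ intros j Hj. rewrite (eq_punct_partial n (partial j (partial i F)) (partial i (partial j F)));
      auto.
      - apply (partial_comm n (partial j F) x); auto. apply smooth_partial; auto.
      - intros y Hy. apply (partial_comm n F y); auto. }
  unfold sphere_grad. fold F. rewrite S_INR. change (INR 1) with 1. ring.
Qed.

Lemma sphere_grad_lapS i f x : (i <= n)%nat -> ext_smooth n f -> on_sphere n x ->
  sphere_grad n i (lapS n f) x = 2 * x i * lapS n f x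
    + sum_f_R0 (fun j => partial i (partial j (partial j (ext n f))) x) n.
Proof.
  intros Hi Hf Hx. assert (Hp := on_sphere_punctured n x Hx).
  set (S := fun y => sum_f_R0 (fun j => partial j (partial j (ext n f)) y) n).
  assert (SS : smooth n S)
    by (apply smooth_sum; intros j Hj; apply smooth_partial, smooth_partial; auto).
  unfold sphere_grad.
  rewrite (eq_punct_partial n _ (fun y => sqnorm n y * S y) i (ext_lapS n f Hf) Hi x Hp).
  rewrite partial_mult, partial_sqnorm; auto.
  2,3: apply (smooth_derivable_along n); auto using smooth_sqnorm.
  unfold S at 2. rewrite partial_sum.
  2:{ intros k Hk. apply (smooth_derivable_along n); auto.
      apply smooth_partial, smooth_partial; auto. }
  rewrite on_sphere_sqnorm; auto. unfold lapS, S. rewrite Rmult_1_l. reflexivity.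
Qed.

Lemma lapS_sphere_grad i f x : (i <= n)%nat -> ext_smooth n f -> on_sphere n x ->
  lapS n (sphere_grad n i f) x
  = sphere_grad n i (lapS n f) x + (INR n - 2) * sphere_grad n i f x - 2 * x i * lapS n f x.
Proof.
  intros Hi Hf Hx. rewrite lapS_sphere_grad_expand, sphere_grad_lapS; auto. ring.
Qed.

End Sphere_identities.

(** * GJMS operators *)

Section GJMS_commutator.
Variable n : nat.
Variable u : vec -> R.
Hypothesis Hu : ext_smooth n u.

Lemma lapS_GJMS k x :
  lapS n (GJMS n k u) x = GJMS_coef n (S k) * GJMS n k u x - GJMS n (S k) u x.
Proof. rewrite GJMS_S. ring. Qed.

Lemma sphere_grad_lapS_GJMS i k x : (i <= n)%nat -> punctured n x ->
  sphere_grad n i (lapS n (GJMS n k u)) x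
  = GJMS_coef n (S k) * sphere_grad n i (GJMS n k u) x - sphere_grad n i (GJMS n (S k) u) x.
Proof.
  intros Hi Hx.
  replace (lapS n (GJMS n k u))
    with (fun z => GJMS_coef n (S k) * GJMS n k u z + (-1) * GJMS n (S k) u z).
  - rewrite sphere_grad_lin; auto using ext_smooth_GJMS. ring.
  - apply functional_extensionality; intro z. rewrite lapS_GJMS. ring.
Qed.

Lemma GJMS_mulx i k x : (i <= n)%nat -> on_sphere n x ->
  GJMS n (S k) (mulx i u) x
  = x i * (GJMS n (S k) u x + INR (S k) * (INR n + 2 * INR (S k) - 2) * GJMS n k u x)
    - 2 * INR (S k) * sphere_grad n i (GJMS n k u) x.
Proof.
  intros Hi. revert x. induction k as [|k IHk]; intros x Hx.
  - rewrite !GJMS_S. cbn [GJMS]. rewrite lapS_mulx; auto. unfold mulx, GJMS_coef.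
    change (INR 1) with 1. change (INR 0) with 0. unfold mulx. ring.
  - assert (Hp := on_sphere_punctured n x Hx).
    set (a := fun z => 1 * GJMS n (S k) u z
                       + (INR (S k) * (INR n + 2 * INR (S k) - 2)) * GJMS n k u z).
    set (b := GJMS n k u).
    assert (Sa : ext_smooth n a) by (apply ext_smooth_lin; apply ext_smooth_GJMS; auto).
    assert (Sb : ext_smooth n b) by (apply ext_smooth_GJMS; auto).
    rewrite GJMS_S, IHk; auto.
    rewrite (lapS_eq_punct n _ (fun z => 1 * mulx i a z + (- 2 * INR (S k)) * sphere_grad n i b z));
      auto.
    2:{ apply ext_eq_punct. intros z Hz. rewrite IHk; auto. unfold mulx, a, b. ring. }
    rewrite lapS_lin, lapS_mulx, lapS_sphere_grad;
      auto using ext_smooth_mulx, ext_smooth_sphere_grad.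
    unfold a, b. clear a b Sa Sb.
    rewrite lapS_lin, sphere_grad_lin, sphere_grad_lapS_GJMS, !lapS_GJMS;
      auto using ext_smooth_GJMS.
    unfold GJMS_coef. rewrite !S_INR. field.
Qed.

End GJMS_commutator.

Theorem theorem1p3 (n k : nat) (hn : (2 <= n)%nat) (hk : (1 <= k)%nat)
  (u : vec -> R) (hu : smooth_sphere n u) (x : vec) (hx : on_sphere n x) :
  sum_f_R0 (fun i => x i * (GJMS n k (mulx i u) x - x i * GJMS n k u x)) n
  = INR k * (INR n + 2 * INR k - 2) * GJMS n (k - 1) u x.
Proof.
  destruct k as [|k]; [lia|]. replace (S k - 1)%nat with k by lia.
  assert (Hu : ext_smooth n u) by (intro N; apply smooth_punctured_cont_diff, hu).
  rewrite (sum_eq _ (fun i => INR (S k) * (INR n + 2 * INR (S k) - 2) * GJMS n k u x * x i ^ 2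
                              + (- 2 * INR (S k)) * (x i * sphere_grad n i (GJMS n k u) x))).
  2:{ intros i Hi. rewrite GJMS_mulx; auto. ring. }
  rewrite sum_f_R0_lin, sum_sphere_grad; auto using ext_smooth_GJMS, on_sphere_punctured.
  fold (sqnorm n x). rewrite on_sphere_sqnorm; auto. ring.
Qed.
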